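(* Let $Q\in V_{\alpha,\beta}$ be a quadric with $Q(v_0)=Q(v_1)$ whose $M_S$-translates span $V_{\alpha,\beta}$. Then for every $i=0,\dots,4$ (indices mod 5): $Q(v_i)=Q(v_0)$, $$B(v_{i+1},v_{i-1})=B(v_1,v_4)\prod_{j=1}^{i}\sigma^{j-1}\!\left(\frac{\beta^2}{\sigma(\beta)\sigma^4(\beta)}\right),\qquad B(v_{i+2},v_{i-2})=B(v_2,v_3)\prod_{j=1}^{i}\sigma^{j-1}\!\left(\frac{\beta^2}{\sigma^2(\beta)\sigma^3(\beta)}\right).$$
   Context: $K$ is a field with $\mathrm{char}(K)\neq5$ containing a primitive 5th root of unity $\zeta$; $E/K$ is an elliptic curve with full rational 5-torsion, basis $S,T$. $a\in K^*$ not a fifth power, $\alpha^5=a$, $L=K(\alpha)$, $\sigma(\alpha)=\zeta\alpha$, $\beta=\sum_{i=0}^4\beta_i\alpha^i\in L$ with $N_{L/K}(\beta)=b$. $M_S=M_{a,5}$ (with $(M_{a,5}x)_i=x_{i+1}$ for $i\le3$, $(M_{a,5}x)_4=ax_0$), $M_T=\mathrm{diag}(1,\zeta,\dots,\zeta^4)\sum_i\beta_iM_S^i$. $V_{\alpha,\beta}$ is the unique 5-dimensional $K$-space of quadrics in $x_0,\dots,x_4$ defining a smooth degree 5 genus one curve $C_{\alpha,\beta}\subset\mathbb P^4$ with Jacobian $E$, corresponding to $(a,b)\in H^1(K,E[5])$, on which $S,T$ act by $M_S,M_T$ (in particular $V_{\alpha,\beta}$ is stable under $Q\mapsto Q^{M_S}$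 and $Q\mapsto Q^{M_T}$, where $f^M(x)=f(Mx)$). $v_i=(1,\alpha\zeta^i,\alpha^2\zeta^{2i},\alpha^3\zeta^{3i},\alpha^4\zeta^{4i})$, and $B(w,v)=Q(w+v)-Q(w)-Q(v)$ is the associated bilinear form. *)

From HB Require Import structures.
From mathcomp Require Import all_boot all_order all_algebra.
From mathcomp Require Import mpoly.
Set Implicit Arguments. Unset Strict Implicit. Unset Printing Implicit Defensive.
Import GRing.Theory.
Local Open Scope ring_scope.

Section Defs.
Variables (K L : fieldType).

Definition is_quadric (Q : {mpoly K[5]}) : bool :=
  all (fun m => mdeg m == 2%N) (msupp Q).

Definition linsub (M : 'M[K]_5) : 5.-tuple {mpoly K[5]} :=
  [tuple \sum_(j < 5) M i j *: 'X_j | i < 5].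

Definition qtrans (Q : {mpoly K[5]}) (M : 'M[K]_5) : {mpoly K[5]} :=
  Q \mPo linsub M.

Definition qeval (iota : K -> L) (Q : {mpoly K[5]}) (x : 'I_5 -> L) : L :=
  mmap iota x Q.

Definition qbil (iota : K -> L) (Q : {mpoly K[5]}) (w v : 'I_5 -> L) : L :=
  qeval iota Q (fun k => w k + v k) - qeval iota Q w - qeval iota Q v.

(* M_{a,5}: (M x)_i = x_{i+1} for i <= 3, (M x)_4 = a x_0 *)
Definition Mmat (a : K) : 'M[K]_5 :=
  \matrix_(i < 5, j < 5)
    (if (i < 4)%N then (j == i.+1 :> nat)%:R else a * (j == 0%N :> nat)%:R).

Definition MTmat (a z : K) (bc : 'I_5 -> K) : 'M[K]_5 :=
  diag_mx (\row_(i < 5) z ^+ i) *m \sum_(i < 5) bc i *: Mmat a ^+ i.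

Definition ofcoords (iota : K -> L) (alpha : L) (c : 'I_5 -> K) : L :=
  \sum_(i < 5) iota (c i) * alpha ^+ i.

Definition vpt (iota : K -> L) (alpha : L) (z : K) (i : nat) : 'I_5 -> L :=
  fun k => (alpha * iota z ^+ i) ^+ k.

End Defs.

From HB Require Import structures.
From mathcomp Require Import all_boot all_order all_algebra.
From mathcomp Require Import mpoly.
From mathcomp Require Import ring.
From Stdlib Require Import FunctionalExtensionality.
Set Implicit Arguments. Unset Strict Implicit. Unset Printing Implicit Defensive.
Import GRing.Theory.
Local Open Scope ring_scope.

(* The v_i are eigenvectors of M_S (eigenvalue alpha z^i) permuted cyclically
   by sigma, and M_T v_i = sigma^i(beta) v_(i+1).  As Q is defined over K,
   sigma(Q(v_i)) = Q(v_(i+1)) and sigma(B(v_p, v_q)) = B(v_(p+1), v_(q+1)).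
   Write Q^(M_T) = sum_k c_k Q^(M_S^k) and f(t) = sum_k c_k t^k.  Evaluating at
   v_0, where Q does not vanish since v_0 is not a base point of V, gives
   beta^2 = f(alpha^2).  When p + q = 5 the eigenvalues of v_p and v_q multiply
   to alpha^2, so the same identity applied to B(v_p, v_q) shows that sigma
   multiplies B(v_p, v_q) by beta^2 / (sigma^p(beta) sigma^q(beta)); iterating
   this cocycle relation gives the product formulas. *)

Lemma mmap1_mdeg2 (R : comNzRingType) n (m : 'X_{1..n}) : mdeg m = 2%N ->
  exists i j : 'I_n, forall h : 'I_n -> R, mmap1 h m = h i * h j.
Proof.
move=> m2.
case: (pickP (fun i : 'I_n => m i != 0%N)) => [i mi|m0]; last first.
  have : mdeg m = 0%N by rewrite mdegE big1 // => i _; apply/eqP/negbFE/m0.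
  by rewrite m2.
have le_Ui_m : (U_(i) <= m)%MM.
  by apply/mnm_lepP => j; rewrite mnm1E; case: eqP => [<-|] //=; rewrite lt0n.
have mE := submK le_Ui_m.
have m1 : mdeg (m - U_(i)) == 1%N.
  by move: m2; rewrite -{1}mE mdegD mdeg1 addn1 => -[->].
have [j /eqP mUj] := mdeg1P _ m1.
exists j, i => h; rewrite -mE mUj commr_mmap1_M ?mmap1U // => k x.
exact: mulrC.
Qed.

Lemma iter_rmorph_mul_factor (R : comPzRingType) (sigma : {rmorphism R -> R}) (x g : R) :
  sigma x = x * g -> forall i, iter i sigma x = x * \prod_(j < i) iter j sigma g.
Proof.
move=> sigma_x; elim=> [|i IHi]; first by rewrite big_ord0 mulr1.
rewrite iterS IHi rmorphM rmorph_prod sigma_x big_ord_recl -mulrA.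
by congr (_ * (_ * _)); apply: eq_bigr => j _; rewrite lift0.
Qed.

Section QuadricForms.
Variables (K L : fieldType) (iota : {rmorphism K -> L}).

Definition mxact (M : 'M[K]_5) (x : 'I_5 -> L) : 'I_5 -> L :=
  fun k => \sum_(j < 5) iota (M k j) * x j.

Lemma mxactD M w v :
  mxact M (fun k => w k + v k) = (fun k => mxact M w k + mxact M v k).
Proof.
apply: functional_extensionality => k; rewrite /mxact -big_split /=.
by apply: eq_bigr => j _; rewrite mulrDr.
Qed.

Lemma mxact_scale M (t : L) x :
  mxact M (fun k => t * x k) = (fun k => t * mxact M x k).
Proof.
apply: functional_extensionality => k; rewrite /mxact mulr_sumr.
by apply: eq_bigr => j _; rewrite mulrCA.
Qed.

Lemma mxact1 x : mxact 1 x = x.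
Proof.
apply: functional_extensionality => k.
rewrite /mxact (bigD1 k) //= big1 ?addr0; first by rewrite mxE eqxx rmorph1 mul1r.
by move=> j jk; rewrite mxE eq_sym (negbTE jk) rmorph0 mul0r.
Qed.

Lemma mxactM M N x : mxact (M *m N) x = mxact M (mxact N x).
Proof.
apply: functional_extensionality => k; rewrite /mxact.
under eq_bigr do rewrite mxE rmorph_sum mulr_suml.
rewrite exchange_big /=; apply: eq_bigr => l _.
by rewrite mulr_sumr; apply: eq_bigr => j _; rewrite rmorphM mulrA.
Qed.

Lemma mxact_sumZ n (c : 'I_n -> K) (M : 'I_n -> 'M[K]_5) x k :
  mxact (\sum_(l < n) c l *: M l) x k = \sum_(l < n) iota (c l) * mxact (M l) x k.
Proof.
rewrite /mxact; under eq_bigr do rewrite summxE rmorph_sum mulr_suml.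
rewrite exchange_big /=; apply: eq_bigr => l _.
by rewrite mulr_sumr; apply: eq_bigr => j _; rewrite mxE rmorphM mulrA.
Qed.

Lemma mxact_diag (d : 'rV[K]_5) x k : mxact (diag_mx d) x k = iota (d 0 k) * x k.
Proof.
rewrite /mxact (bigD1 k) //= big1 ?addr0; first by rewrite mxE eqxx mulr1n.
by move=> j jk; rewrite mxE eq_sym (negbTE jk) mulr0n rmorph0 mul0r.
Qed.

Lemma mxact_expr_eigen M w (l : L) :
  mxact M w = (fun k => l * w k) ->
  forall e, mxact (M ^+ e) w = (fun k => l ^+ e * w k).
Proof.
move=> Mw; elim=> [|e IHe].
  by rewrite expr0 mxact1; apply: functional_extensionality => k; rewrite mul1r.
rewrite exprS mxactM IHe mxact_scale Mw.
by apply: functional_extensionality => k; rewrite exprS mulrCA mulrA.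
Qed.

Lemma qeval_sumZ n (c : 'I_n -> K) (P : 'I_n -> {mpoly K[5]}) x :
  qeval iota (\sum_(k < n) c k *: P k) x
  = \sum_(k < n) iota (c k) * qeval iota (P k) x.
Proof. by rewrite /qeval raddf_sum; apply: eq_bigr => k _; apply: mmapZ. Qed.

Lemma qeval_qtrans Q M x : qeval iota (qtrans Q M) x = qeval iota Q (mxact M x).
Proof.
rewrite /qeval /qtrans comp_mpolyEX raddf_sum /mmap /=.
apply: eq_bigr => m _; rewrite (mmapZ x iota); congr (_ * _).
rewrite comp_mpolyX rmorph_prod /mmap1; apply: eq_bigr => i _.
rewrite rmorphXn tnth_mktuple raddf_sum; congr (_ ^+ _).
apply: eq_bigr => j _.
transitivity (mmap iota x (M i j *: 'X_j)); first by [].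
by rewrite (mmapZ x iota) mmapX mmap1U.
Qed.

Lemma qbil_qtrans Q M w v :
  qbil iota (qtrans Q M) w v = qbil iota Q (mxact M w) (mxact M v).
Proof. by rewrite /qbil !qeval_qtrans mxactD. Qed.

Lemma qbil_sumZ n (c : 'I_n -> K) (P : 'I_n -> {mpoly K[5]}) w v :
  qbil iota (\sum_(k < n) c k *: P k) w v
  = \sum_(k < n) iota (c k) * qbil iota (P k) w v.
Proof. by rewrite /qbil !qeval_sumZ -!sumrB; apply: eq_bigr => k _; ring. Qed.

Lemma qeval_lincomb Q (l u : L) w v : is_quadric Q ->
  qeval iota Q (fun k => l * w k + u * v k)
  = l ^+ 2 * qeval iota Q w + u ^+ 2 * qeval iota Q v + l * u * qbil iota Q w v.
Proof.
move=> /allP Q2.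
rewrite /qbil /qeval /mmap -!sumrB !mulr_sumr -!big_split /=.
apply: eq_big_seq => m /Q2 /eqP /(mmap1_mdeg2 L) [i [j mE]].
by rewrite !mE; ring.
Qed.

Lemma qeval_scale Q (l : L) w : is_quadric Q ->
  qeval iota Q (fun k => l * w k) = l ^+ 2 * qeval iota Q w.
Proof.
move=> Q2; have := qeval_lincomb l 0 w w Q2.
rewrite (_ : (fun k => _) = (fun k => l * w k)); last first.
  by apply: functional_extensionality => k; rewrite mul0r addr0.
by move=> ->; rewrite expr0n /= mul0r mulr0 mul0r !addr0.
Qed.

Lemma qbil_scale Q (l u : L) w v : is_quadric Q ->
  qbil iota Q (fun k => l * w k) (fun k => u * v k) = l * u * qbil iota Q w v.
Proof. by move=> Q2; rewrite {1}/qbil qeval_lincomb // !qeval_scale //; ring. Qed.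

Section Eigenvectors.
Variables (Q : {mpoly K[5]}) (M : 'M[K]_5) (n : nat) (c : 'I_n -> K).
Hypothesis Q2 : is_quadric Q.

Lemma qeval_sum_qtrans_eigen w l :
  mxact M w = (fun k => l * w k) ->
  qeval iota (\sum_(k < n) c k *: qtrans Q (M ^+ k)) w
  = (\sum_(k < n) iota (c k) * (l ^+ 2) ^+ k) * qeval iota Q w.
Proof.
move=> Mw; rewrite qeval_sumZ mulr_suml; apply: eq_bigr => k _.
by rewrite qeval_qtrans (mxact_expr_eigen Mw) qeval_scale // exprAC mulrA.
Qed.

Lemma qbil_sum_qtrans_eigen w v l u :
  mxact M w = (fun k => l * w k) -> mxact M v = (fun k => u * v k) ->
  qbil iota (\sum_(k < n) c k *: qtrans Q (M ^+ k)) w v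
  = (\sum_(k < n) iota (c k) * (l * u) ^+ k) * qbil iota Q w v.
Proof.
move=> Mw Mv; rewrite qbil_sumZ mulr_suml; apply: eq_bigr => k _.
by rewrite qbil_qtrans (mxact_expr_eigen Mw) (mxact_expr_eigen Mv) qbil_scale //
  -exprMn mulrA.
Qed.

End Eigenvectors.

Lemma qeval_eigen_neq0 (V : pred {mpoly K[5]}) Q M w l : is_quadric Q ->
  mxact M w = (fun k => l * w k) ->
  (exists2 p, p \in V & qeval iota p w != 0) ->
  (forall p, p \in V -> exists n (c : 'I_n -> K),
      p = \sum_(k < n) c k *: qtrans Q (M ^+ k)) ->
  qeval iota Q w != 0.
Proof.
move=> Q2 Mw [p pV pw] Vspan; have [n [c pE]] := Vspan p pV.
move: pw; rewrite pE (qeval_sum_qtrans_eigen c Q2 Mw).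
by apply: contraNneq => ->; rewrite mulr0.
Qed.

Section FixedField.
Variable sigma : {rmorphism L -> L}.
Hypothesis sigma_iota : forall c : K, sigma (iota c) = iota c.

Lemma rmorph_qeval Q x :
  sigma (qeval iota Q x) = qeval iota Q (fun k => sigma (x k)).
Proof.
rewrite /qeval /mmap rmorph_sum; apply: eq_bigr => m _.
rewrite rmorphM sigma_iota rmorph_prod; congr (_ * _).
by apply: eq_bigr => i _; rewrite rmorphXn.
Qed.

Lemma rmorph_qbil Q w v :
  sigma (qbil iota Q w v)
  = qbil iota Q (fun k => sigma (w k)) (fun k => sigma (v k)).
Proof.
rewrite /qbil !rmorphB !rmorph_qeval; congr (qeval _ _ _ - _ - _).
by apply: functional_extensionality => k; rewrite rmorphD.
Qed.

End FixedField.
End QuadricForms.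

Section KummerPoints.
Variables (K L : fieldType) (iota : {rmorphism K -> L}) (sigma : {rmorphism L -> L}).
Variables (z a : K) (alpha : L).
Hypotheses (z5 : z ^+ 5 = 1) (alpha5 : alpha ^+ 5 = iota a).
Hypotheses (sigma_iota : forall c : K, sigma (iota c) = iota c)
           (sigma_alpha : sigma alpha = iota z * alpha).

Local Notation v := (vpt iota alpha z).
Local Notation lam n := (alpha * iota z ^+ n).

Lemma iota_z5 : iota z ^+ 5 = 1.
Proof. by rewrite -rmorphXn z5 rmorph1. Qed.

Lemma lam_mul_compl p q : (p + q = 5)%N -> lam p * lam q = alpha ^+ 2.
Proof. by move=> pq; rewrite mulrACA -exprD pq iota_z5 mulr1. Qed.

Lemma vpt_sigma n : (fun k => sigma (v n k)) = v n.+1.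
Proof.
apply: functional_extensionality => k.
rewrite /vpt rmorphXn rmorphM sigma_alpha rmorphXn sigma_iota exprS.
by congr (_ ^+ _); ring.
Qed.

Lemma mxact_Mmat_vpt n : mxact iota (Mmat a) (v n) = (fun k => lam n * v n k).
Proof.
apply: functional_extensionality => k; rewrite /mxact /vpt.
case: k => [[|[|[|[|[|k]]]]] ?] //; rewrite !big_ord_recl big_ord0 !mxE /=.
all: rewrite ?mulr0n ?mulr1n ?mulr1 ?mulr0 ?rmorph0 ?rmorph1 ?mul0r ?mul1r ?addr0 ?add0r.
1-4: by rewrite /bump /=; ring.
(* (M_S v_n)_4 = a = alpha^5 = (alpha z^n)^5 since z^5 = 1 *)
by rewrite -alpha5 -exprS exprMn -exprM mulnC exprM iota_z5 expr1n mulr1.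
Qed.

Lemma iter_sigma_ofcoords n c :
  iter n sigma (ofcoords iota alpha c) = ofcoords iota (lam n) c.
Proof.
elim: n => [|n IHn]; first by rewrite expr0 mulr1.
rewrite iterS IHn /ofcoords rmorph_sum; apply: eq_bigr => l _.
rewrite rmorphM sigma_iota rmorphXn rmorphM rmorphXn sigma_alpha sigma_iota exprS.
by congr (_ * (_ ^+ _)); ring.
Qed.

Lemma mxact_MTmat_vpt bc n :
  mxact iota (MTmat a z bc) (v n)
  = (fun k => iter n sigma (ofcoords iota alpha bc) * v n.+1 k).
Proof.
apply: functional_extensionality => k.
rewrite /MTmat mxactM mxact_diag mxact_sumZ mxE rmorphXn iter_sigma_ofcoords.
rewrite /ofcoords mulr_suml mulr_sumr; apply: eq_bigr => l _.
rewrite (mxact_expr_eigen (mxact_Mmat_vpt n)) /vpt exprS !exprMn; ring.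
Qed.

Lemma qeval_vpt_iter Q n : qeval iota Q (v n) = iter n sigma (qeval iota Q (v 0)).
Proof.
by elim: n => [|n IHn] //; rewrite -vpt_sigma -rmorph_qeval // IHn.
Qed.

Lemma qbil_vpt_iter Q n p q :
  qbil iota Q (v (n + p)) (v (n + q)) = iter n sigma (qbil iota Q (v p) (v q)).
Proof.
by elim: n => [|n IHn] //; rewrite iterS -IHn rmorph_qbil // !vpt_sigma.
Qed.

Lemma qeval_vpt_const Q n :
  qeval iota Q (v 0) = qeval iota Q (v 1) -> qeval iota Q (v n) = qeval iota Q (v 0).
Proof.
move=> Q01; have fixed : sigma (qeval iota Q (v 0)) = qeval iota Q (v 0).
  by rewrite rmorph_qeval // vpt_sigma Q01.
by rewrite qeval_vpt_iter; elim: n => [|n IHn] //=; rewrite IHn fixed.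
Qed.

Variables (bc : 'I_5 -> K) (Q : {mpoly K[5]}) (n : nat) (c : 'I_n -> K).
Hypotheses (Q2 : is_quadric Q) (Qv0 : qeval iota Q (v 0) != 0)
           (Q01 : qeval iota Q (v 0) = qeval iota Q (v 1)).
Hypothesis QT : qtrans Q (MTmat a z bc) = \sum_(k < n) c k *: qtrans Q (Mmat a ^+ k).

Local Notation beta := (ofcoords iota alpha bc).

Lemma sqr_beta_eval : beta ^+ 2 = \sum_(k < n) iota (c k) * (alpha ^+ 2) ^+ k.
Proof.
have := congr1 (fun p => qeval iota p (v 0)) QT.
rewrite /= qeval_qtrans mxact_MTmat_vpt qeval_scale // -Q01.
rewrite (qeval_sum_qtrans_eigen c Q2 (mxact_Mmat_vpt 0)) expr0 mulr1.
by move/mulIf; apply.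
Qed.

Lemma qbil_vpt_succ p q : (p + q = 5)%N ->
  iter p sigma beta * iter q sigma beta * qbil iota Q (v p.+1) (v q.+1)
  = beta ^+ 2 * qbil iota Q (v p) (v q).
Proof.
move=> pq; have := congr1 (fun r => qbil iota r (v p) (v q)) QT.
rewrite /= qbil_qtrans !mxact_MTmat_vpt qbil_scale // => ->.
rewrite (qbil_sum_qtrans_eigen c Q2 (mxact_Mmat_vpt p) (mxact_Mmat_vpt q)).
by rewrite lam_mul_compl // sqr_beta_eval.
Qed.

Lemma rmorph_qbil_vpt p q : (p + q = 5)%N ->
  iter p sigma beta != 0 -> iter q sigma beta != 0 ->
  sigma (qbil iota Q (v p) (v q))
  = qbil iota Q (v p) (v q) * (beta ^+ 2 / (iter p sigma beta * iter q sigma beta)).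
Proof.
move=> pq p0 q0; rewrite rmorph_qbil // !vpt_sigma mulrA [_ * beta ^+ 2]mulrC.
by rewrite -(qbil_vpt_succ pq); field; rewrite p0 q0.
Qed.

End KummerPoints.

Theorem mainTheorem8
  (K L : fieldType) (iota : {rmorphism K -> L})
  (z : K) (hz : 5.-primitive_root z) (hchar : (5%:R : K) != 0)
  (a : K) (ha0 : a != 0) (ha : ~ (exists c : K, c ^+ 5 = a))
  (alpha : L) (halpha : alpha ^+ 5 = iota a)
  (hgen : forall x : L, exists c : 'I_5 -> K, x = ofcoords iota alpha c)
  (sigma : {rmorphism L -> L})
  (hsigK : forall c : K, sigma (iota c) = iota c)
  (hsiga : sigma alpha = iota z * alpha)
  (bc : 'I_5 -> K) (b : K) (hb0 : b != 0)
  (hnorm : \prod_(j < 5) iter j sigma (ofcoords iota alpha bc) = iota b)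
  (V : pred {mpoly K[5]})
  (hV0 : 0 \in V)
  (hVlin : forall (c : K) p q, p \in V -> q \in V -> c *: p + q \in V)
  (hVquad : forall p, p \in V -> is_quadric p)
  (hVdim : exists e : 'I_5 -> {mpoly K[5]},
      [/\ forall i, e i \in V,
          forall c : 'I_5 -> K, \sum_(i < 5) c i *: e i = 0 -> forall i, c i = 0
        & forall p, p \in V -> exists c : 'I_5 -> K, p = \sum_(i < 5) c i *: e i])
  (hVS : forall p, p \in V -> qtrans p (Mmat a) \in V)
  (hVT : forall p, p \in V -> qtrans p (MTmat a z bc) \in V)
  (hVnofix : forall (x : 'I_5 -> L) (lam : L), (exists k, x k != 0) ->
      (forall k, \sum_(j < 5) iota (Mmat a k j) * x j = lam * x k) ->
      exists2 p, p \in V & qeval iota p x != 0)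
  (Q : {mpoly K[5]}) (hQ : Q \in V)
  (hQ01 : qeval iota Q (vpt iota alpha z 0) = qeval iota Q (vpt iota alpha z 1))
  (hspan : forall p, p \in V -> exists (n : nat) (c : 'I_n -> K),
      p = \sum_(k < n) c k *: qtrans Q (Mmat a ^+ k)) :
  let beta := ofcoords iota alpha bc in
  let v := vpt iota alpha z in
  forall i : nat, (i < 5)%N ->
    [/\ qeval iota Q (v i) = qeval iota Q (v 0%N),
        qbil iota Q (v (i + 1)%N) (v (i + 4)%N)
          = qbil iota Q (v 1%N) (v 4%N)
            * \prod_(j < i) iter j sigma (beta ^+ 2 / (sigma beta * iter 4 sigma beta))
      & qbil iota Q (v (i + 2)%N) (v (i + 3)%N)
          = qbil iota Q (v 2%N) (v 3%N)
            * \prod_(j < i) iter j sigma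
                (beta ^+ 2 / (iter 2 sigma beta * iter 3 sigma beta))].
Proof.
move=> beta v i _.
have z5 : z ^+ 5 = 1 := prim_expr_order hz.
have Q2 := hVquad Q hQ.
have Mv0 := mxact_Mmat_vpt z5 halpha 0.
have Qv0 : qeval iota Q (v 0%N) != 0.
  apply: (qeval_eigen_neq0 Q2 Mv0 _ hspan); apply: hVnofix => [|k].
    by exists ord0; rewrite /v /vpt expr0 oner_neq0.
  exact: (congr1 (fun f => f k) Mv0).
have [n [c QT]] := hspan _ (hVT Q hQ).
have beta_neq0 j : (j < 5)%N -> iter j sigma beta != 0.
  have : \prod_(j < 5) iter j sigma beta != 0 by rewrite hnorm fmorph_eq0.
  by move=> /prodf_neq0 beta_prod lt_j5; apply: beta_prod (Ordinal lt_j5) isT.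
have sigma_qbil := rmorph_qbil_vpt z5 halpha hsigK hsiga Q2 Qv0 hQ01 QT.
split; first exact: qeval_vpt_const.
- rewrite (qbil_vpt_iter hsigK hsiga); apply: iter_rmorph_mul_factor.
  by apply: sigma_qbil => //; apply: beta_neq0.
- rewrite (qbil_vpt_iter hsigK hsiga); apply: iter_rmorph_mul_factor.
  by apply: sigma_qbil => //; apply: beta_neq0.
Qed.
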